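(* There is an integer $N$ such that the following holds. Let $H$ be a connected graph with at least $N$ vertices that does not contain a subgraph isomorphic to $S_{4,4}$. Let $y_0$ be a vertex of $H$ with $\deg y_0\ge 4$, and let $y_0y_1y_2y_3y_4$ be a path in $H$ (distinct vertices with $y_i\sim y_{i+1}$). Then: 1. $\deg y_0=4$; 2. $y_0\sim y_2$, $y_0\nsim y_3$, and $y_0\nsim y_4$; 3. if $N(y_0)=\{y_1,y_2,y',y''\}$, then $y_1\nsim y'$ and $y_1\nsim y''$.
   Context: Graphs are finite simple graphs; $\sim$ denotes adjacency, $N(v)$ the set of neighbors of $v$, $\deg v=|N(v)|$. The sparkler graph $S_{4,4}$ is obtained from the star $K_{1,3}$ and the path $P_4$ on 4 vertices by adding an edge between an end vertex of $P_4$ and the central vertex of $K_{1,3}$. *)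

From mathcomp Require Import all_boot.
Set Implicit Arguments. Unset Strict Implicit. Unset Printing Implicit Defensive.

Definition simple_graph (T : finType) (e : rel T) : Prop :=
  symmetric e /\ irreflexive e.

Definition connected_graph (T : finType) (e : rel T) : Prop :=
  forall x y : T, connect e x y.

Definition nbhd (T : finType) (e : rel T) (v : T) : {set T} := [set w | e v w].

Definition deg (T : finType) (e : rel T) (v : T) : nat := #|nbhd e v|.

(* The sparkler S_{4,4} on vertex set 'I_8:
   0 = centre of K_{1,3}, 1,2,3 = its leaves,
   4-5-6-7 = the path P_4, with end vertex 4 joined to the centre 0. *)
Definition S44_edge (i j : 'I_8) : bool :=
  let a := nat_of_ord i in let b := nat_of_ord j in
  ((a, b) \in [:: (0,1); (0,2); (0,3); (0,4); (4,5); (5,6); (6,7)])%N.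

Definition S44 (i j : 'I_8) : bool := S44_edge i j || S44_edge j i.

(* H contains a (not necessarily induced) subgraph isomorphic to S_{4,4}:
   an injective map of vertices sending edges of S_{4,4} to edges of H. *)
Definition contains_S44 (T : finType) (e : rel T) : Prop :=
  exists f : 'I_8 -> T, injective f /\ forall i j, S44 i j -> e (f i) (f j).

(* If c starts a path c p1 p2 p3 p4, three neighbours of c off the path would complete
   a copy of S_{4,4}; hence deg c <= 6, and if deg c >= 4 then c is adjacent to p2, p3
   or p4.  Let C consist of the path y0 ... y4 and the neighbours of y0.  Every vertex of
   C other than y2, and every neighbour of C, starts such a path, and no path of three
   steps leaves C.  So if deg y2 <= 6, connectedness makes the graph the ball of radius 2
   around C, with at most 11 + 66 + 396 = 473 vertices.  For N = 474 the vertex y2 thus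
   starts no path of length 4, and each conclusion holds because its failure would give
   one (e.g. y2 y1 y0 y3 y4 when y0 ~ y3). *)

From mathcomp Require Import all_boot zify.
Set Implicit Arguments. Unset Strict Implicit. Unset Printing Implicit Defensive.

Ltac split_conj := repeat match goal with
  | H : is_true (_ && _) |- _ => case/andP: H => ? ? end.

Ltac solve_uniq := intros; rewrite /= ?inE ?negb_or; split_conj;
  repeat (apply/andP; split); try done; rewrite eq_sym; done.

Ltac solve_path := solve [ done
  | match goal with H : symmetric ?e |- is_true (?e _ _) => by rewrite H end
  | solve_uniq ].

Lemma card_set_seq_le (T : finType) (s : seq T) : #|[set:: s]| <= size s.
Proof. by rewrite cardsE card_size. Qed.

Section SparklerFreeGraphs.
Variables (T : finType) (e : rel T).
Hypotheses (e_sym : symmetric e) (e_irr : irreflexive e).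

Lemma adj_neq x y : e x y -> x != y.
Proof. by apply: contraTneq => ->; rewrite e_irr. Qed.

Lemma sparkler_contains_S44 c l1 l2 l3 p1 p2 p3 p4 :
  uniq [:: c; l1; l2; l3; p1; p2; p3; p4] ->
  e c l1 -> e c l2 -> e c l3 -> e c p1 -> e p1 p2 -> e p2 p3 -> e p3 p4 ->
  contains_S44 e.
Proof.
move=> U *; exists (nth c [:: c; l1; l2; l3; p1; p2; p3; p4]); split.
  by move=> i j /eqP; rewrite nth_uniq // => /eqP /val_inj.
move=> [[|[|[|[|[|[|[|[|i]]]]]]]] ?] [[|[|[|[|[|[|[|[|j]]]]]]]] ?] //=;
  by rewrite /S44 /S44_edge /= => // _; rewrite // e_sym.
Qed.

Definition nbhdS (A : {set T}) : {set T} := \bigcup_(x in A) nbhd e x.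

Lemma card_nbhdS_le k (A : {set T}) :
  {in A, forall x, deg e x <= k} -> #|nbhdS A| <= k * #|A|.
Proof.
move=> degA; apply: (@leq_trans (\sum_(x in A) deg e x)); last first.
  by rewrite mulnC -sum_nat_const leq_sum.
rewrite /nbhdS; elim/big_rec2: _ => [|x m B _ IH]; first by rewrite cards0.
by apply: leq_trans (leq_card_setU _ _) _; rewrite leq_add2l.
Qed.

Lemma connect_exit (R : {set T}) x u : x \in R -> u \notin R -> connect e x u ->
  exists r w, [/\ r \in R, w \notin R & e r w].
Proof.
move=> xR uR /connectP[p]; elim: p x xR => [|z p IH] x xR /=.
  by move=> _ eq_ux; rewrite eq_ux xR in uR.
case/andP=> exz pz eq_u; have [zR | zR] := boolP (z \in R); first exact: IH pz eq_u.
by exists x, z.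
Qed.

Lemma connected_ball2_setT (S : {set T}) x :
  connected_graph e -> x \in S ->
  (forall s q r w, s \in S -> q \notin S -> r \notin S -> w \notin S ->
     uniq [:: q; r; w] -> e s q -> e q r -> e r w -> False) ->
  S :|: nbhdS S :|: nbhdS (nbhdS S) = [set: T].
Proof.
move=> conn xS no_exit; apply/setP => u; rewrite in_setT; apply: contraT => uN; exfalso.
have xB : x \in S :|: nbhdS S :|: nbhdS (nbhdS S) by rewrite !inE xS.
have [r [w [rB wN erw]]] := connect_exit xB uN (conn x u).
have nbhdSP (A : {set T}) v a : a \in A -> e a v -> v \in nbhdS A.
  by move=> aA eav; apply/bigcupP; exists a; rewrite ?inE.
move: wN; rewrite !inE !negb_or => /andP[/andP[wS wN1] wN2].
have [rS | rS] := boolP (r \in S); first by rewrite (nbhdSP _ _ _ rS erw) in wN1.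
have [rN1 | rN1] := boolP (r \in nbhdS S); first by rewrite (nbhdSP _ _ _ rN1 erw) in wN2.
move: rB; rewrite !inE (negbTE rS) (negbTE rN1) /= => /bigcupP[q qN1]; rewrite inE => eqr.
have [qS | qS] := boolP (q \in S); first by rewrite (nbhdSP _ _ _ qS eqr) in rN1.
case/bigcupP: (qN1) => s sS; rewrite inE => esq.
apply: (no_exit s q r w) => //; rewrite /= !inE !negb_or (adj_neq eqr) (adj_neq erw) /=.
by rewrite andbT; apply: contraNneq wN1 => <-.
Qed.

Hypothesis noS44 : ~ contains_S44 e.

Lemma card_nbhd_off_path_le2 c p1 p2 p3 p4 : uniq [:: c; p1; p2; p3; p4] ->
  e c p1 -> e p1 p2 -> e p2 p3 -> e p3 p4 ->
  #|nbhd e c :\: [set:: [:: p1; p2; p3; p4]]| <= 2.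
Proof.
move=> U e1 e2 e3 e4; rewrite leqNgt; apply/card_gt2P => -[a [b [d [[aN bN dN] abd]]]].
move: aN bN dN; rewrite !inE => /andP[aP eca] /andP[bP ecb] /andP[dP ecd].
apply: noS44; apply: (sparkler_contains_S44 _ eca ecb ecd e1 e2 e3 e4).
have := adj_neq eca; have := adj_neq ecb; have := adj_neq ecd; case: abd.
by move: aP bP dP U; rewrite /= !inE !negb_or => *; solve_uniq.
Qed.

Lemma deg_le6_of_path c p1 p2 p3 p4 : uniq [:: c; p1; p2; p3; p4] ->
  e c p1 -> e p1 p2 -> e p2 p3 -> e p3 p4 -> deg e c <= 6.
Proof.
move=> U e1 e2 e3 e4; rewrite /deg -(cardsID [set:: [:: p1; p2; p3; p4]]).
rewrite -[6]/(4 + 2) leq_add ?(card_nbhd_off_path_le2 U e1 e2 e3 e4) //.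
exact: leq_trans (subset_leq_card (subsetIr _ _)) (card_set_seq_le _).
Qed.

Lemma deg_gt3_path_chord c p1 p2 p3 p4 : 3 < deg e c -> uniq [:: c; p1; p2; p3; p4] ->
  e c p1 -> e p1 p2 -> e p2 p3 -> e p3 p4 -> [|| e c p2, e c p3 | e c p4].
Proof.
move=> degc U e1 e2 e3 e4; apply: contraLR (card_nbhd_off_path_le2 U e1 e2 e3 e4).
rewrite !negb_or -ltnNge => /and3P[n2 n3 n4].
have sub : nbhd e c :\ p1 \subset nbhd e c :\: [set:: [:: p1; p2; p3; p4]].
  apply/subsetP => x; rewrite !inE => /andP[xp1 ecx].
  rewrite ecx andbT (negbTE xp1) /=.
  by apply/norP; split; [|apply/norP; split]; apply: contraTneq ecx => ->.
apply: leq_trans (subset_leq_card sub); move: degc.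
by rewrite /deg (cardsD1 p1) inE e1.
Qed.

Lemma exists_nbr_avoiding c a b d : 3 < deg e c ->
  exists x, [/\ e c x, x != a, x != b & x != d].
Proof.
move=> degc; have : 0 < #|nbhd e c :\: [set:: [:: a; b; d]]|.
  have : #|nbhd e c :&: [set:: [:: a; b; d]]| <= 3.
    exact: leq_trans (subset_leq_card (subsetIr _ _)) (card_set_seq_le _).
  by move: degc; rewrite /deg -(cardsID [set:: [:: a; b; d]]); lia.
case/card_gt0P => x; rewrite !inE !negb_or => /andP[/and3P[xa xb xd] ecx].
by exists x.
Qed.

Section PathFromHighDegreeVertex.
Variables y0 y1 y2 y3 y4 : T.
Hypotheses (deg_y0 : 3 < deg e y0) (Uy : uniq [:: y0; y1; y2; y3; y4]).
Hypotheses (e01 : e y0 y1) (e12 : e y1 y2) (e23 : e y2 y3) (e34 : e y3 y4).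

Definition core : {set T} := [set:: [:: y0; y1; y2; y3; y4]] :|: nbhd e y0.

Lemma card_core_le11 : #|core| <= 11.
Proof.
apply: leq_trans (leq_card_setU _ _) _.
exact: (leq_add (card_set_seq_le _) (deg_le6_of_path Uy e01 e12 e23 e34)).
Qed.

Lemma core_path3 s : s \in core -> exists p q r,
  [/\ p \in core, q \in core, r \in core, uniq [:: s; p; q; r]
    & [/\ e s p, e p q & e q r]].
Proof.
have := Uy; rewrite /= !inE !negb_or => ?; split_conj.
have [a [e0a ay1 ay2 _]] := exists_nbr_avoiding y1 y2 y2 deg_y0.
have a0 := adj_neq e0a.
have [sP _ | sP /= e0s] := boolP [|| s == y0, s == y1, s == y2, s == y3 | s == y4].
  case/orP: sP => [/eqP->|/orP[/eqP->|/orP[/eqP->|/orP[/eqP->|/eqP->]]]].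
  - by exists y1, y2, y3; rewrite !inE !eqxx ?orbT; split; try split; solve_path.
  - by exists y2, y3, y4; rewrite !inE !eqxx ?orbT; split; try split; solve_path.
  - by exists y1, y0, a; rewrite !inE !eqxx e0a ?orbT; split; try split; solve_path.
  - by exists y2, y1, y0; rewrite !inE !eqxx ?orbT; split; try split; solve_path.
  - by exists y3, y2, y1; rewrite !inE !eqxx ?orbT; split; try split; solve_path.
exists y0, y1, y2; rewrite !inE !eqxx ?orbT; split; try split; try solve_path.
by move: sP; rewrite !negb_or => ?; solve_uniq.
Qed.

Lemma core_no_exit s q r w : s \in core -> q \notin core -> r \notin core ->
  w \notin core -> uniq [:: q; r; w] -> e s q -> e q r -> e r w -> False.
Proof.
move=> sC qC rC wC Uqrw esq eqr erw.
move: qC rC wC; rewrite !inE !negb_or => /andP[qP nq] /andP[rP nr] /andP[wP nw].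
have := Uy; move: qP rP wP Uqrw; rewrite /= !inE !negb_or => *; split_conj.
have chordless a b c d : uniq [:: y0; a; b; c; d] -> e y0 a -> e a b -> e b c -> e c d ->
    ~~ e y0 b -> ~~ e y0 c -> ~~ e y0 d -> False.
  move=> U0 ea eb ec ed nb nc nd; have := deg_gt3_path_chord deg_y0 U0 ea eb ec ed.
  by rewrite (negbTE nb) (negbTE nc) (negbTE nd).
have [e0s | n0s] := boolP (e y0 s).
  have ns x : ~~ e y0 x -> s != x by apply: contraNneq => <-.
  apply: (chordless s q r w) => //.
  by have := adj_neq e0s; have := ns _ nq; have := ns _ nr; have := ns _ nw; solve_uniq.
move: sC; rewrite !inE (negbTE n0s) orbF.
case/orP => [/eqP Es|/orP[/eqP Es|/orP[/eqP Es|/orP[/eqP Es|/eqP Es]]]]; subst s.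
- by rewrite esq in nq.
- by rewrite e01 in n0s.
- by apply: (chordless y1 y2 q r) => //; solve_uniq.
- have [e02 | n02] := boolP (e y0 y2).
    by apply: (chordless y2 y3 q r) => //; solve_uniq.
  by apply: (chordless y1 y2 y3 q) => //; solve_uniq.
- have [e03 | n03] := boolP (e y0 y3).
    by apply: (chordless y3 y4 q r) => //; solve_uniq.
  have [e02 | n02] := boolP (e y0 y2).
    by apply: (chordless y2 y3 y4 q) => //; solve_uniq.
  by apply: (chordless y1 y2 y3 y4) => //; solve_uniq.
Qed.

Lemma deg_core_le6 : deg e y2 <= 6 -> {in core, forall v, deg e v <= 6}.
Proof.
move=> deg_y2 v; have := Uy; rewrite /= !inE !negb_or => ?; split_conj.
have [a [e0a ay1 ay2 ay3]] := exists_nbr_avoiding y1 y2 y3 deg_y0.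
have a0 := adj_neq e0a.
have [vP _ | vP /= e0v] := boolP [|| v == y0, v == y1, v == y2, v == y3 | v == y4].
  case/orP: vP => [/eqP->|/orP[/eqP->|/orP[/eqP->|/orP[/eqP->|/eqP->]]]].
  - exact: deg_le6_of_path Uy e01 e12 e23 e34.
  - have := deg_gt3_path_chord deg_y0 Uy e01 e12 e23 e34.
    case/or3P => [e02 | e03 | e04].
    + by apply: (deg_le6_of_path (p1 := y0) (p2 := y2) (p3 := y3) (p4 := y4)); solve_path.
    + by apply: (deg_le6_of_path (p1 := y2) (p2 := y3) (p3 := y0) (p4 := a)); solve_path.
    + by apply: (deg_le6_of_path (p1 := y0) (p2 := y4) (p3 := y3) (p4 := y2)); solve_path.
  - exact: deg_y2.
  - by apply: (deg_le6_of_path (p1 := y2) (p2 := y1) (p3 := y0) (p4 := a)); solve_path.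
  - by apply: (deg_le6_of_path (p1 := y3) (p2 := y2) (p3 := y1) (p4 := y0)); solve_path.
apply: (deg_le6_of_path (p1 := y0) (p2 := y1) (p3 := y2) (p4 := y3)); try solve_path.
by move: vP; rewrite !negb_or => ?; solve_uniq.
Qed.

Lemma deg_nbhdS_core_le6 : deg e y2 <= 6 -> {in nbhdS core, forall v, deg e v <= 6}.
Proof.
move=> deg_y2 v vN; have [vC | vC] := boolP (v \in core); first exact: deg_core_le6.
case/bigcupP: vN => s sC; rewrite inE => esv.
have [p [q [r [pC qC rC Us [esp epq eqr]]]]] := core_path3 sC.
apply: (deg_le6_of_path (p1 := s) (p2 := p) (p3 := q) (p4 := r)); try solve_path.
rewrite cons_uniq Us andbT; apply: contra vC.
by rewrite !in_cons in_nil orbF => /or4P[] /eqP->.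
Qed.

Lemma deg_y2_gt6 : 474 <= #|T| -> connected_graph e -> 6 < deg e y2.
Proof.
move=> bigT conn; rewrite ltnNge; apply/negP => deg_y2.
have y0C : y0 \in core by rewrite !inE eqxx.
have ball := connected_ball2_setT conn y0C core_no_exit.
have card_ball : #|T| <= #|core| + #|nbhdS core| + #|nbhdS (nbhdS core)|.
  rewrite -cardsT -ball; apply: leq_trans (leq_card_setU _ _) _.
  by rewrite leq_add2r leq_card_setU.
have := card_nbhdS_le (deg_core_le6 deg_y2).
have := card_nbhdS_le (deg_nbhdS_core_le6 deg_y2).
have := card_core_le11; lia.
Qed.

Section HighDegreeY2.
Hypothesis deg_y2 : 6 < deg e y2.

Lemma no_path4_from_y2 a b c d : uniq [:: y2; a; b; c; d] ->
  e y2 a -> e a b -> e b c -> e c d -> False.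
Proof.
by move=> U ea eb ec ed; move: deg_y2; rewrite ltnNge (deg_le6_of_path U ea eb ec ed).
Qed.

Lemma nonadj_y0_y3 : ~~ e y0 y3.
Proof.
apply/negP => e03; have := Uy; rewrite /= !inE !negb_or => ?; split_conj.
by apply: (no_path4_from_y2 (a := y1) (b := y0) (c := y3) (d := y4)); solve_path.
Qed.

Lemma nonadj_y0_y4 : ~~ e y0 y4.
Proof.
apply/negP => e04; have := Uy; rewrite /= !inE !negb_or => ?; split_conj.
by apply: (no_path4_from_y2 (a := y1) (b := y0) (c := y4) (d := y3)); solve_path.
Qed.

Lemma adj_y0_y2 : e y0 y2.
Proof.
have := deg_gt3_path_chord deg_y0 Uy e01 e12 e23 e34.
by rewrite (negbTE nonadj_y0_y3) (negbTE nonadj_y0_y4) !orbF.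
Qed.

Lemma deg_y0_eq4 : deg e y0 = 4.
Proof.
apply/eqP; rewrite eqn_leq deg_y0 andbT /deg -(cardsID [set:: [:: y1; y2; y3; y4]]).
rewrite -[4]/(2 + 2) leq_add ?(card_nbhd_off_path_le2 Uy e01 e12 e23 e34) //.
have sub : nbhd e y0 :&: [set:: [:: y1; y2; y3; y4]] \subset [set y1; y2].
  apply/subsetP => x; rewrite !inE => /andP[e0x /or4P[] /eqP xE];
    rewrite xE ?eqxx ?orbT //; rewrite xE in e0x.
    by move: nonadj_y0_y3; rewrite e0x.
  by move: nonadj_y0_y4; rewrite e0x.
by apply: leq_trans (subset_leq_card sub) _; rewrite cards2 ltnS leq_b1.
Qed.

Lemma nonadj_y1_other_nbrs y' y'' : nbhd e y0 = [set y1; y2; y'; y''] ->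
  ~~ e y1 y' /\ ~~ e y1 y''.
Proof.
move=> N0; have := Uy; rewrite /= !inE !negb_or => ?; split_conj.
have U4 : uniq [:: y1; y2; y'; y''].
  apply/card_uniqP; rewrite -[size _]/4 -deg_y0_eq4 /deg N0.
  by apply: eq_card => x; rewrite !inE !orbA.
have e0' : y' \in nbhd e y0 by rewrite N0 !inE eqxx !orbT.
have e0'' : y'' \in nbhd e y0 by rewrite N0 !inE eqxx !orbT.
rewrite !inE in e0' e0''; have := adj_neq e0'; have := adj_neq e0''.
move: U4; rewrite /= !inE !negb_or => *; split_conj.
split; apply/negP => e1y.
  by apply: (no_path4_from_y2 (a := y1) (b := y') (c := y0) (d := y'')); solve_path.
by apply: (no_path4_from_y2 (a := y1) (b := y'') (c := y0) (d := y')); solve_path.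
Qed.

End HighDegreeY2.

Lemma high_degree_path_structure : 474 <= #|T| -> connected_graph e ->
  [/\ deg e y0 = 4, [/\ e y0 y2, ~~ e y0 y3 & ~~ e y0 y4] &
    forall y' y'', nbhd e y0 = [set y1; y2; y'; y''] -> ~~ e y1 y' /\ ~~ e y1 y''].
Proof.
move=> bigT conn; have deg_y2 := deg_y2_gt6 bigT conn.
split; [exact: deg_y0_eq4 | split | exact: nonadj_y1_other_nbrs].
- exact: adj_y0_y2.
- exact: nonadj_y0_y3.
- exact: nonadj_y0_y4.
Qed.

End PathFromHighDegreeVertex.

End SparklerFreeGraphs.

Theorem lemma4 :
  exists N : nat,
  forall (T : finType) (e : rel T),
    simple_graph e -> connected_graph e -> (N <= #|T|)%N ->
    ~ contains_S44 e ->
    forall y0 y1 y2 y3 y4 : T,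
      (4 <= deg e y0)%N ->
      uniq [:: y0; y1; y2; y3; y4] ->
      e y0 y1 -> e y1 y2 -> e y2 y3 -> e y3 y4 ->
      [/\ deg e y0 = 4,
          [/\ e y0 y2, ~~ e y0 y3 & ~~ e y0 y4] &
          forall y' y'' : T, nbhd e y0 = [set y1; y2; y'; y''] ->
            ~~ e y1 y' /\ ~~ e y1 y''].
Proof.
exists 474 => T e [e_sym e_irr] conn bigT noS44 y0 y1 y2 y3 y4 deg_y0 Uy e01 e12 e23 e34.
exact: high_degree_path_structure.
Qed.
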